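(* Let $\ell\ge 3$ and $n_1,\dots,n_\ell$ be integers with $n_i\ge 2$ for all $i$, and let $G$ be the xor-product of the complete graphs $K_{n_1},\dots,K_{n_\ell}$. Then $\omega(G)\ge n_1+\dots+n_\ell-2\ell-1$.
   Context: The xor-product of graphs $G_1,\dots,G_\ell$ has vertex set $V(G_1)\times\dots\times V(G_\ell)$, two vertices $(g_1,\dots,g_\ell)$ and $(g'_1,\dots,g'_\ell)$ being adjacent iff the number of indices $i$ with $g_ig'_i\in E(G_i)$ is odd. $\omega$ denotes the clique number. *)

From mathcomp Require Import all_boot.
Set Implicit Arguments. Unset Strict Implicit. Unset Printing Implicit Defensive.

Definition xor_vertex (l : nat) (n : 'I_l -> nat) : finType :=
  {dffun forall i : 'I_l, 'I_(n i)}.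

Definition complete_adj (m : nat) (a b : 'I_m) : bool := a != b.

Definition xor_adj (l : nat) (n : 'I_l -> nat) (g g' : xor_vertex n) : bool :=
  odd #|[set i : 'I_l | complete_adj (g i) (g' i)]|.

Definition is_clique (T : finType) (adj : rel T) (A : {set T}) : bool :=
  [forall x in A, forall y in A, (x != y) ==> adj x y].

From mathcomp Require Import all_boot zify.

(* Every vertex of the clique has exactly one coordinate s with a value b >= 2,
   its class; elsewhere it follows a 0/1 pattern depending only on s.  For s >= 1
   the pattern is 1 on the coordinates 1..s-1, the parity bit ~~ odd s on
   coordinate 0 and 0 beyond s; class 0 follows a tail z.  Vertices of one class
   differ in a single coordinate, and vertices of classes s < t differ at s, at t
   and wherever their patterns differ, so it suffices that the pattern distances
   are odd.  For 1 <= s < t this is a parity count; for s = 0 it asks that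
   #{0 < i < t | z i != 1} + #{t < i | z i != 0} be odd, which an alternating tail
   achieves unless l = 2 (mod 4).  Then z takes the value 2 at coordinate 2 and
   class 2 gives up its value 2, so at most one vertex is lost beyond the two
   values per coordinate reserved for the patterns. *)

Definition hamming (t : nat) (f g : nat -> nat) : nat := \sum_(i < t) (f i != g i).

Lemma hamming_sym t f g : hamming t f g = hamming t g f.
Proof. by apply: eq_bigr => i _; rewrite eq_sym. Qed.

Lemma hamming_refl t f : hamming t f f = 0.
Proof. by apply: big1 => i _; rewrite eqxx. Qed.

Lemma sum_ord_in_interval N m k :
  \sum_(i < N) (m <= i < k) = minn k N - minn m N.
Proof.
elim: N => [|N IH]; first by rewrite big_ord0 !minn0.
by rewrite big_ord_recr /= IH; lia.
Qed.

Lemma sum_ord_eq N (k : nat) (b : bool) :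
  \sum_(i < N) ((i == k :> nat) && b) = (k < N) && b.
Proof.
case: b; last by rewrite andbF big1 // => i; rewrite andbF.
rewrite (eq_bigr (fun i : 'I_N => (k <= i < k.+1 : nat))) => [|i _]; last by lia.
by rewrite sum_ord_in_interval; lia.
Qed.

Lemma sum_ord_odd_gt1 m (w : bool) :
  1 < m -> \sum_(i < m) ((1 < i) && odd (i + w)) = (m + w)./2 - 1.
Proof.
elim: m => // m IH; rewrite ltnS leq_eqVlt => /orP[/eqP <-|m_gt1].
  by rewrite !big_ord_recr big_ord0 /=; lia.
by rewrite big_ord_recr /= IH // m_gt1; lia.
Qed.

Section Patterns.

Variable l : nat.

Definition class_vertex (P : nat -> nat -> nat) (s b i : nat) : nat :=
  if i == s then b else P s i.

Definition pattern_dist (P : nat -> nat -> nat) (s t : nat) : nat :=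
  \sum_(i < l) [&& i != s :> nat, i != t :> nat & P s i != P t i].

Lemma hamming_class_vertex_same P s b b' :
  s < l -> hamming l (class_vertex P s b) (class_vertex P s b') = (b != b').
Proof.
move=> s_lt.
rewrite /hamming (eq_bigr (fun i : 'I_l => ((i == s :> nat) && (b != b') : nat))).
  by rewrite sum_ord_eq s_lt.
by move=> i _; rewrite /class_vertex; case: ifP; rewrite ?eqxx.
Qed.

Lemma hamming_class_vertex P s t b b' :
  s < l -> t < l -> s != t -> b != P t s -> b' != P s t ->
  hamming l (class_vertex P s b) (class_vertex P t b') = (pattern_dist P s t).+2.
Proof.
move=> s_lt t_lt st bP b'P.
rewrite /hamming (eq_bigr (fun i : 'I_l =>
    ((i == s :> nat) && true) + ((i == t :> nat) && true) +
    [&& i != s :> nat, i != t :> nat & P s i != P t i])).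
  by rewrite !big_split /= !sum_ord_eq s_lt t_lt.
move=> i _; rewrite /class_vertex.
case: (eqVneq (i : nat) s) => [->|_]; first by rewrite (negPf st) bP.
by case: (eqVneq (i : nat) t) => [->|//]; rewrite eq_sym b'P.
Qed.

Definition class_pattern (z : nat -> nat) (s i : nat) : nat :=
  if s == 0 then z i else if i == 0 then ~~ odd s else i < s.

Lemma pattern_dist_pos z s t : 0 < s -> s < t -> t < l ->
  pattern_dist (class_pattern z) s t = (odd s != odd t) + (t - s.+1).
Proof.
move=> s_gt0 st t_lt.
rewrite /pattern_dist (eq_bigr (fun i : 'I_l =>
    ((i == 0 :> nat) && (odd s != odd t)) + (s.+1 <= i < t))).
  by rewrite big_split /= sum_ord_eq sum_ord_in_interval; lia.
move=> i _; rewrite /class_pattern (gtn_eqF s_gt0) (gtn_eqF (ltn_trans s_gt0 st)).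
by case: (eqVneq (i : nat) 0) => [->|]; rewrite ?negbK; lia.
Qed.

Lemma odd_pattern_dist_pos z s t : 0 < s -> s < t -> t < l ->
  odd (pattern_dist (class_pattern z) s t).
Proof. by move=> *; rewrite pattern_dist_pos //; lia. Qed.

Definition tail_dist (z : nat -> nat) (t : nat) : nat :=
  \sum_(i < l) [&& i != 0 :> nat, i != t :> nat & z i != (i < t)].

Lemma pattern_dist0 z t : 0 < t -> pattern_dist (class_pattern z) 0 t = tail_dist z t.
Proof.
move=> t_gt0; apply: eq_bigr => i _; rewrite /class_pattern eqxx (gtn_eqF t_gt0).
by case: (eqVneq (i : nat) 0).
Qed.

Lemma tail_distS z t : 0 < t -> t.+1 < l ->
  tail_dist z t.+1 + (z t.+1 != 0) = tail_dist z t + (z t != 1).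
Proof.
move=> t_gt0 t_lt.
have := sum_ord_eq l t.+1 (z t.+1 != 0); rewrite t_lt /= => <-.
have := sum_ord_eq l t (z t != 1); rewrite (ltnW t_lt) /= => <-.
rewrite -!big_split; apply: eq_bigr => i _ /=.
case: (eqVneq (i : nat) t) => [->|it]; first by rewrite ltnSn gtn_eqF //; lia.
case: (eqVneq (i : nat) t.+1) => [->|_]; first by rewrite ltnn ltnNge leqnSn; lia.
by rewrite ltnS leq_eqVlt (negPf it).
Qed.

Lemma tail_dist_const z t0 t : 0 < t0 -> t0 <= t -> t < l ->
  (forall k, t0 <= k < t -> (z k != 1) = (z k.+1 != 0)) ->
  tail_dist z t = tail_dist z t0.
Proof.
move=> t0_gt0; elim: t => [|t IH].
  by rewrite leqn0 => /eqP t0_0; rewrite t0_0 in t0_gt0.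
rewrite leq_eqVlt => /orP[/eqP -> //|t0_lt] t_lt alt.
rewrite ltnS in t0_lt.
have := tail_distS z t (leq_trans t0_gt0 t0_lt) t_lt.
rewrite -alt ?t0_lt ?ltnSn // => /addIn ->; apply: IH => // [|k /andP[t0k kt]].
  exact: ltnW.
by apply: alt; rewrite t0k ltnW.
Qed.

Lemma tail_dist1 z : tail_dist z 1 = \sum_(i < l) ((1 < i) && (z i != 0)).
Proof. by apply: eq_bigr => -[[|[|i]] ?]. Qed.

(* [c] says that coordinate 2 has room for the value 2.  When it has not, class 2
   is empty and the tail instead breaks its alternation at both 1 and 2. *)
Definition base_tail (c : bool) (i : nat) : nat :=
  if l %% 4 == 2 then
    if i == 1 then (~~ c : nat) else if i == 2 then (if c then 2 else 1) else odd i
  else odd (i + (l %% 4 == 3)).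

Lemma odd_tail_dist c t : 3 <= l -> 0 < t -> t < l -> [|| c, t != 2 | l %% 4 != 2] ->
  odd (tail_dist (base_tail c) t).
Proof.
move=> l_ge3 t_gt0 t_lt used; set z := base_tail c.
have [l4|l4] := eqVneq (l %% 4) 2.
  have odd1 : odd (tail_dist z 1).
    rewrite tail_dist1 (eq_bigr (fun i : 'I_l =>
      ((1 < i) && odd (i + false)) + ((i == 2 :> nat) && true))); last first.
      by move=> i _; rewrite /z /base_tail l4 /=; do ![case: ifP => ?]; lia.
    by rewrite big_split sum_ord_odd_gt1 ?sum_ord_eq /=; lia.
  have alt k : 2 < k -> (z k != 1) = (z k.+1 != 0).
    by rewrite /z /base_tail l4 /=; do ![case: ifP => ?]; lia.
  have tail_dist2 : tail_dist z 2 + 1 = tail_dist z 1 + c.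
    by have := tail_distS z 1 erefl l_ge3; rewrite /z /base_tail l4 /=; case: (c).
  have tail_dist3 : tail_dist z 3 + 1 = tail_dist z 2 + c.
    have l_gt3 : 3 < l by lia.
    by have := tail_distS z 2 erefl l_gt3; rewrite /z /base_tail l4 /=; case: (c).
  case: (ltngtP t 2) => [t_lt2|t_gt2|t2]; first by rewrite (_ : t = 1) //; lia.
    rewrite (@tail_dist_const z 3 t) //; last by move=> k /andP[k_ge3 _]; apply: alt.
    lia.
  by move: used; rewrite t2 l4 /= orbF => c_true; rewrite c_true in tail_dist2; lia.
have alt k : 0 < k -> (z k != 1) = (z k.+1 != 0).
  by rewrite /z /base_tail (negPf l4); lia.
rewrite (@tail_dist_const z 1 t) //; last by move=> k /andP[k_gt0 _]; exact: alt.
rewrite tail_dist1 (eq_bigr (fun i : 'I_l => ((1 < i) && odd (i + (l %% 4 == 3)) : nat))).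
  by rewrite sum_ord_odd_gt1; lia.
by move=> i _; rewrite /z /base_tail (negPf l4); lia.
Qed.

Definition class_low (c : bool) (t : nat) : nat :=
  if [&& l %% 4 == 2, c & t == 2] then 3 else 2.

Lemma class_pattern_lt_low c s t : class_pattern (base_tail c) s t < class_low c t.
Proof.
rewrite /class_pattern /base_tail /class_low.
by do ![case: ifP => ? /=]; lia.
Qed.

Lemma sum_class_low c : \sum_(t < l) class_low c t <= 2 * l + 1.
Proof.
apply: (@leq_trans (\sum_(t < l) (2 + ((t == 2 :> nat) && true)))).
  by apply: leq_sum => t _; rewrite /class_low; case: ifP; lia.
by rewrite big_split /= sum_nat_const card_ord sum_ord_eq; lia.
Qed.

Lemma odd_pattern_dist c s t : 3 <= l -> s < t -> t < l -> [|| c, t != 2 | l %% 4 != 2] ->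
  odd (pattern_dist (class_pattern (base_tail c)) s t).
Proof.
move=> l_ge3 st t_lt used; have t_gt0 : 0 < t by apply: leq_ltn_trans st.
have [->|s_gt0] := posnP s; last exact: odd_pattern_dist_pos.
by rewrite pattern_dist0 // odd_tail_dist.
Qed.

Lemma odd_hamming_class_vertex c s t b b' : 3 <= l -> s < l -> t < l ->
  (s, b) != (t, b') -> class_low c s <= b -> class_low c t <= b' ->
  [|| c, s != 2 | l %% 4 != 2] -> [|| c, t != 2 | l %% 4 != 2] ->
  odd (hamming l (class_vertex (class_pattern (base_tail c)) s b)
                 (class_vertex (class_pattern (base_tail c)) t b')).
Proof.
move=> l_ge3; wlog st : s t b b' / s <= t => [wlog_st|].
  move=> *; have [st|ts] := leqP s t; first exact: wlog_st.
  by rewrite hamming_sym wlog_st // 1?eq_sym // ltnW.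
move=> s_lt t_lt sb_tb' b_ge b'_ge _ used_t.
have [s_t|s_t] := eqVneq s t.
  by move: sb_tb'; rewrite s_t hamming_class_vertex_same // xpair_eqE eqxx => /= ->.
rewrite hamming_class_vertex //= ?negbK.
- by apply: odd_pattern_dist; rewrite // ltn_neqAle s_t.
- by rewrite gtn_eqF // (leq_trans (class_pattern_lt_low _ _ _)).
- by rewrite gtn_eqF // (leq_trans (class_pattern_lt_low _ _ _)).
Qed.

End Patterns.

Section XorClique.

Variables (l : nat) (n : 'I_l -> nat).
Hypothesis n_gt0 : forall i, 0 < n i.

Definition xor_vertex_of (f : nat -> nat) : xor_vertex n :=
  @finfun _ (fun i => 'I_(n i)) (fun i => insubd (Ordinal (n_gt0 i)) (f i)).

Lemma xor_adj_of (f g : nat -> nat) :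
  (forall i : 'I_l, f i < n i) -> (forall i : 'I_l, g i < n i) ->
  xor_adj (xor_vertex_of f) (xor_vertex_of g) = odd (hamming l f g).
Proof.
move=> f_lt g_lt; rewrite /xor_adj /hamming -sum1_card big_mkcond /=.
congr odd; apply: eq_bigr => i _.
rewrite inE /complete_adj /xor_vertex_of !ffunE -(inj_eq val_inj) /=.
by rewrite !insubdK; [|exact: g_lt|exact: f_lt].
Qed.

Lemma clique_of_odd_family (K : finType) (F : K -> nat -> nat) :
  (forall k (i : 'I_l), F k i < n i) ->
  (forall k k', k != k' -> odd (hamming l (F k) (F k'))) ->
  exists A : {set xor_vertex n}, is_clique (@xor_adj l n) A /\ #|A| = #|K|.
Proof.
move=> F_lt F_odd; pose V k := xor_vertex_of (F k).
have adjV k k' : k != k' -> xor_adj (V k) (V k').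
  by move=> kk'; rewrite xor_adj_of // F_odd.
exists [set V k | k : K]; split.
  apply/forallP => x; apply/implyP => /imsetP[k _ ->].
  apply/forallP => y; apply/implyP => /imsetP[k' _ ->].
  by apply/implyP => Vkk'; apply: adjV; apply: contraNneq Vkk' => ->.
rewrite card_imset // => k k' Vkk'; apply/eqP; apply: contraT => /adjV.
by rewrite Vkk' xor_adj_of // hamming_refl.
Qed.

End XorClique.

Section XorProductOfCompleteGraphs.

Variables (l : nat) (n : 'I_l -> nat).
Hypothesis n_ge2 : forall i, 2 <= n i.

Definition n2_gt2 : bool := [exists i : 'I_l, (i == 2 :> nat) && (2 < n i)].

Definition class_index : finType := {t : 'I_l & 'I_(n t - class_low l n2_gt2 t)}.

Definition class_family (p : class_index) : nat -> nat :=
  class_vertex (class_pattern (base_tail l n2_gt2)) (tag p)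
    (class_low l n2_gt2 (tag p) + tagged p).

Lemma class_family_lt p (i : 'I_l) : class_family p i < n i.
Proof.
case: p => t b; rewrite /class_family /class_vertex /=.
case: eqP => [i_t|_].
  have -> : i = t by apply: val_inj.
  by have := ltn_ord b; lia.
apply: (leq_trans (class_pattern_lt_low _ _ _ _)); rewrite /class_low.
case: ifP => [/and3P[_ /existsP[j /andP[/eqP j2 n_j]] /eqP i2]|_]; last exact: n_ge2.
by have <- : j = i by apply: val_inj; rewrite /= j2 i2.
Qed.

Lemma class_index_admissible (p : class_index) :
  [|| n2_gt2, tag p != 2 :> nat | l %% 4 != 2].
Proof.
case: p => t b /=; have : class_low l n2_gt2 t < n t by have := ltn_ord b; lia.
rewrite /class_low.
case: (eqVneq (t : nat) 2) => [t2|]; rewrite ?orbT //.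
case: (boolP n2_gt2) => // /existsPn /(_ t); rewrite t2 eqxx /=.
by case: ifP; lia.
Qed.

Lemma odd_hamming_class_family p p' : 3 <= l -> p != p' ->
  odd (hamming l (class_family p) (class_family p')).
Proof.
move=> l_ge3 pp'; apply: odd_hamming_class_vertex; rewrite ?leq_addr ?class_index_admissible //.
apply: contra pp'; case: p p' => t b [t' b'] /= /eqP[/val_inj tt'].
by subst t'; move=> /addnI /val_inj ->.
Qed.

Lemma sum_le_card_class_index : \sum_(i < l) n i <= #|class_index| + 2 * l + 1.
Proof.
rewrite card_tagged sumnE big_map big_enum /=.
rewrite -addnA (leq_trans _ (leq_add (leqnn _) (sum_class_low l n2_gt2))) // -big_split /=.
by apply: leq_sum => t _; rewrite card_ord; lia.
Qed.

End XorProductOfCompleteGraphs.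

Theorem theorem3p3 (l : nat) (n : 'I_l -> nat) :
  3 <= l -> (forall i, 2 <= n i) ->
  exists A : {set xor_vertex n},
    is_clique (@xor_adj l n) A /\
    \sum_(i < l) n i <= #|A| + 2 * l + 1.
Proof.
move=> l_ge3 n_ge2.
have [A [A_clique cardA]] := @clique_of_odd_family l n (fun i => ltnW (n_ge2 i)) _ _
  (@class_family_lt l n n_ge2) (fun p p' => @odd_hamming_class_family l n p p' l_ge3).
by exists A; rewrite cardA sum_le_card_class_index.
Qed.
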